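(* Let $G$ be a finite simple connected graph with at least $4$ vertices and $\delta_2(G)\geqslant 4$. Then either $G$ contains a chorded cycle, or every leaf block of $G$ is a triangle.
   Context: $\delta_2(G)$ is the minimum of $|N_G(u)\cup N_G(v)|$ over all pairs of distinct nonadjacent vertices $u,v$ of $G$. A chorded cycle is a cycle together with an edge of the graph, not on the cycle, joining two vertices of the cycle. A block is a maximal subgraph without cut-vertices; a leaf block of a connected graph is a block containing exactly one cut-vertex of the graph. *)

(* A finite simple graph is a symmetric irreflexive
   relation e on a finType T (vertices = T). *)
From mathcomp Require Import all_boot.
Set Implicit Arguments. Unset Strict Implicit. Unset Printing Implicit Defensive.

Section Graph.
Variables (T : finType) (e : rel T).

Definition nbhd (u : T) : {set T} := [set v | e u v].

(* delta_2(G) >= k : every pair of distinct nonadjacent vertices u, v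
   satisfies |N(u) \cup N(v)| >= k (vacuous if no such pair, i.e. the
   minimum over the empty set is +infinity). *)
Definition delta2_ge (k : nat) : Prop :=
  forall u v : T, u != v -> ~~ e u v -> k <= #|nbhd u :|: nbhd v|.

Definition restr (S : {set T}) : rel T :=
  [rel x y | [&& x \in S, y \in S & e x y]].

Definition connected_on (S : {set T}) : Prop :=
  forall x y, x \in S -> y \in S -> connect (restr S) x y.

Definition connected_graph : Prop := connected_on [set: T].

Definition cut_vertex (v : T) : Prop := ~ connected_on [set~ v].

Definition nonseparable (B : {set T}) : Prop :=
  B != set0 /\ connected_on B /\ forall v, v \in B -> connected_on (B :\ v).

(* a block: maximal subgraph without cut-vertices (blocks are induced,
   so they are determined by their vertex sets) *)
Definition block (B : {set T}) : Prop :=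
  nonseparable B /\ forall B' : {set T}, B \subset B' -> nonseparable B' -> B' = B.

Definition leaf_block (B : {set T}) : Prop :=
  block B /\ exists c, [/\ c \in B, cut_vertex c &
                           forall v, v \in B -> cut_vertex v -> v = c].

Definition triangle (B : {set T}) : Prop :=
  #|B| = 3 /\ forall x y, x \in B -> y \in B -> x != y -> e x y.

(* a chorded cycle: a cycle c = [x_0; ...; x_{m-1}] (m >= 3, distinct
   vertices, consecutive and last-first adjacent) together with an edge
   joining two vertices of c that is not an edge of the cycle *)
Definition has_chorded_cycle : Prop :=
  exists c : seq T,
    [/\ uniq c, 3 <= size c, cycle e c &
      exists x y, [/\ x \in c, y \in c, e x y, y != next c x & x != next c y]].

End Graph.

From mathcomp Require Import all_boot zify.
From Stdlib Require Import Classical.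
Set Implicit Arguments. Unset Strict Implicit. Unset Printing Implicit Defensive.

(* Assume G has no chorded cycle, and let B be a leaf block with cut-vertex c;
   every vertex of B other than c has all its neighbours in B.  The last vertex
   u of a path has at most two neighbours on it: with three, the cycle closed at
   the first of them has a chord to another one.  Take a longest path c ... w u
   in B.  All neighbours of u lie on it, and u has a neighbour a <> w (otherwise
   delta_2 >= 4 forces G - {u, w} to have minimum degree 3, whose longest paths
   end in three back-neighbours), so N(u) = {a, w}.  Reversing the segment after
   a (a Posa rotation) gives another longest path, ending at the successor b of
   a, so N(b) = {a, b'}.  If b <> w, then u and b are non-adjacent with
   |N(u) \cup N(b)| <= 3, contradicting delta_2 >= 4.  If b = w, then
   N(u) = {a, w} and N(w) = {a, u}, and as B - a is connected, B = {a, u, w}. *)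

Lemma ex_argmax_bounded (A : Type) (P : A -> Prop) (f : A -> nat) (n : nat) (a0 : A) :
  P a0 -> (forall a, P a -> f a <= n) -> exists2 a, P a & forall b, P b -> f b <= f a.
Proof.
move=> Pa0 f_le_n.
suff: forall k a, P a -> n - f a <= k -> exists2 a', P a' & forall b, P b -> f b <= f a'.
  by move/(_ (n - f a0) a0 Pa0 (leqnn _)).
elim=> [|k IHk] a Pa le_k.
  by exists a => // b /f_le_n; lia.
have [[b Pb lt_ab]|no_larger] := classic (exists2 b, P b & f a < f b).
  by apply: (IHk b Pb); have := f_le_n b Pb; lia.
by exists a => // b Pb; rewrite leqNgt; apply/negP => lt_ab; apply: no_larger; exists b.
Qed.

Section Graph.
Variables (T : finType) (e : rel T).
Hypotheses (e_sym : symmetric e) (e_irr : irreflexive e).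

Lemma path_chord_chorded_cycle x a s y :
  uniq (x :: a :: s) -> path e a s -> e x a -> e (last a s) x ->
  y \in s -> y != last a s -> e x y -> has_chorded_cycle e.
Proof.
set c := x :: a :: s => Uc Ps xa sx ys y_last xy.
exists c; split => //.
- by rewrite /c; case: (s) ys.
- by rewrite /cycle /= rcons_path Ps xa sx.
exists x, y; split; rewrite ?mem_head ?inE ?ys ?orbT //.
- have -> : next c x = a by rewrite /c /= eqxx.
  by apply: contraTneq ys => ->; case/and3P: Uc.
- apply: contra y_last => /eqP x_next.
  have x_notin : x \notin a :: s by case/andP: Uc.
  have -> : last a s = prev c x.
    by rewrite prev_nth mem_head /c (memNindex x_notin) (nth_last x (x :: a :: s)).
  by rewrite x_next prev_next.
Qed.

Lemma path_end_nbrs_chorded_cycle t u :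
  sorted e (rcons t u) -> uniq (rcons t u) -> 2 < #|[set y in t | e u y]| ->
  has_chorded_cycle e.
Proof.
move=> St Ut N3.
have has_t : has (e u) t.
  have /card_gt0P[y] : 0 < #|[set y in t | e u y]| by apply: leq_ltn_trans N3.
  by rewrite inE => /andP[yt uy]; apply/hasP; exists y.
(* z is the first neighbour of u on t: the cycle z ... u z has a chord from u
   to every other neighbour except the last vertex of t. *)
case: (split_find has_t) St Ut N3 => {has_t} z t1 t2 uz no_t1 St Ut N3.
rewrite cat_rcons rcons_cat in St Ut.
have [_ /=] := cat_sorted2 St; rewrite rcons_path => /andP[Pzt2 t2u].
have Uzt2 : uniq (u :: z :: t2).
  by move: Ut; rewrite cat_uniq rcons_uniq => /and3P[_ _ /andP[]] /= -> ->.
have : 2 < #|z |: [set y in t2 | e u y]|.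
  apply: (leq_trans N3); apply/subset_leq_card/subsetP => y.
  rewrite !inE mem_cat mem_rcons inE -orbA => /andP[/or3P[->|yt1|->] uy]; rewrite ?uy /= ?orbT //.
  by case/hasP: no_t1; exists y.
rewrite cardsU1 => N2; have /card_gt1P[y1 [y2 []]] : 1 < #|[set y in t2 | e u y]|.
  by move: N2; case: (_ \notin _) => /= ?; lia.
rewrite !inE => /andP[y1t2 uy1] /andP[y2t2 uy2] y12.
have [y [yt2 uy y_last]] : exists y, [/\ y \in t2, e u y & y != last z t2].
  case: (eqVneq y1 (last z t2)) => [y1_last|]; last by exists y1.
  by exists y2; split; rewrite // -y1_last eq_sym.
exact: (path_chord_chorded_cycle Uzt2 Pzt2 uz t2u yt2 y_last uy).
Qed.

Definition spath_from (S : {set T}) (x0 : T) (p : seq T) : Prop :=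
  [/\ ohead p = Some x0, sorted e p, uniq p & {subset p <= S}].

Definition longest_spath_from (S : {set T}) (x0 : T) (p : seq T) : Prop :=
  spath_from S x0 p /\ forall q, spath_from S x0 q -> size q <= size p.

Lemma longest_spath_from_exists (S : {set T}) x0 :
  x0 \in S -> exists p, longest_spath_from S x0 p.
Proof.
move=> x0S.
have Sx0 : spath_from S x0 [:: x0] by split=> // y; rewrite inE => /eqP->.
have size_le p : spath_from S x0 p -> size p <= #|T|.
  by case=> _ _ /card_uniqP <- _; exact: max_card.
by have [p] := ex_argmax_bounded Sx0 size_le; exists p.
Qed.

Lemma longest_spath_size_gt1 (S : {set T}) x0 y p :
  x0 \in S -> y \in S -> e x0 y -> longest_spath_from S x0 p -> 1 < size p.
Proof.
move=> x0S yS x0y [_ /(_ [:: x0; y])]; apply; split; rewrite /= ?x0y //.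
  by rewrite inE andbT; apply: contraTneq x0y => ->; rewrite e_irr.
by move=> z; rewrite !inE => /orP[]/eqP->.
Qed.

Lemma longest_spath_end_nbrs (S : {set T}) x0 t u y :
  longest_spath_from S x0 (rcons t u) -> y \in S -> e u y -> y \in t.
Proof.
case=> [[hd St Ut sub] p_max] yS uy; apply/negPn/negP => yt.
have yu : y != u by apply: contraTneq uy => ->; rewrite e_irr.
suff /p_max : spath_from S x0 (rcons (rcons t u) y) by rewrite size_rcons ltnn.
split.
- by case: (t) hd.
- by rewrite -!cats1 -catA sorted_cat_cons St /= uy.
- by rewrite rcons_uniq mem_rcons inE negb_or yu yt.
- by move=> z; rewrite mem_rcons inE => /predU1P[->|/sub].
Qed.

Lemma path_rev_tail a X : path e a X -> e (last a X) a -> path e a (rev X).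
Proof.
move=> PaX Xa.
have -> : path e a (rev X) = sorted e (rev (rcons X a)) by rewrite rev_rcons.
rewrite rev_sorted (eq_sorted (e' := e) (fun x y => e_sym y x)).
by case: X PaX Xa => //= y X /andP[_ PyX] Xa; rewrite rcons_path PyX.
Qed.

Lemma longest_spath_rev_tail (S : {set T}) x0 r a X :
  longest_spath_from S x0 (r ++ a :: X) -> e a (last a X) ->
  longest_spath_from S x0 (r ++ a :: rev X).
Proof.
case=> [[hd Sp Up sub] p_max] a_last.
have perm_p : perm_eq (r ++ a :: rev X) (r ++ a :: X).
  by rewrite perm_cat2l perm_cons perm_rev perm_refl.
split; last by move=> q /p_max; rewrite (perm_size perm_p).
split.
- by case: (r) hd.
- move: Sp; rewrite !sorted_cat_cons => /andP[-> PaX].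
  by rewrite path_rev_tail // e_sym.
- by rewrite (perm_uniq perm_p).
- by move=> z; rewrite (perm_mem perm_p); exact: sub.
Qed.

Lemma min_deg3_chorded_cycle (S : {set T}) x0 : x0 \in S ->
  {in S, forall y, 2 < #|nbhd e y :&: S|} -> has_chorded_cycle e.
Proof.
move=> x0S deg3.
have [p Lp] := longest_spath_from_exists x0S.
case/lastP: p Lp => [|t u] Lp; first by case: Lp => [[]].
have [[_ St Ut sub] _] := Lp.
apply: (path_end_nbrs_chorded_cycle St Ut).
have uS : u \in S by apply: sub; rewrite mem_rcons mem_head.
rewrite (leq_trans (deg3 u uS)) // subset_leq_card //.
apply/subsetP => y; rewrite !inE => /andP[uy yS].
by rewrite (longest_spath_end_nbrs Lp yS uy).
Qed.

Lemma deg_le1_chorded_cycle u w : (forall y, e u y -> y = w) ->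
  4 <= #|T| -> delta2_ge e 4 -> has_chorded_cycle e.
Proof.
move=> Nu T4 D2.
set S := ~: [set u; w].
have : 0 < #|S|.
  have := cardsC [set u; w]; rewrite cards2 -/S.
  by case: (u != w) => /= h; move: T4; rewrite -h; lia.
case/card_gt0P => x0 x0S; apply: (min_deg3_chorded_cycle x0S) => y.
rewrite in_setC !inE negb_or => /andP[yu yw].
have nuy : ~~ e u y by apply: contra yw => /Nu ->.
have sub : nbhd e u :|: nbhd e y \subset w |: (nbhd e y :&: S).
  apply/subsetP => z; rewrite !inE => /orP[/Nu ->|yz]; first by rewrite eqxx.
  case: (eqVneq z w) => [//|_]; rewrite yz orbF.
  by apply: contraNneq nuy => <-; rewrite e_sym.
have := leq_trans (D2 u y _ nuy) (subset_leq_card sub).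
by rewrite eq_sym yu cardsU1 => /(_ isT); case: (_ \notin _) => /= ?; lia.
Qed.

Lemma not_delta2_ge4 u b a w b' :
  u != b -> ~~ e u b -> nbhd e u = [set a; w] -> nbhd e b = [set a; b'] ->
  ~ delta2_ge e 4.
Proof.
move=> ub nub Nu Nb /(_ u b ub nub); rewrite Nu Nb.
have sub3 : [set a; w] :|: [set a; b'] \subset a |: [set w; b'].
  by apply/subsetP => z; rewrite !inE -!orbA => /or4P[] ->; rewrite ?orbT.
move/leq_trans/(_ (subset_leq_card sub3)).
by rewrite cardsU1 cards2; case: (_ \notin _); case: (_ != _).
Qed.

Lemma restr_sym (X : {set T}) : symmetric (restr e X).
Proof. by move=> p q; rewrite /restr /= e_sym andbCA. Qed.

Lemma connect_restr_sym (X : {set T}) : connect_sym (restr e X).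
Proof. exact/sym_connect_sym/restr_sym. Qed.

Lemma connect_restr_mem (X : {set T}) x y :
  connect (restr e X) x y -> x \in X -> y \in X.
Proof. by move=> xy; rewrite (closed_connect _ xy) // => p q /and3P[-> ->]. Qed.

Lemma connect_restr_sub (X Y : {set T}) : X \subset Y ->
  subrel (connect (restr e X)) (connect (restr e Y)).
Proof.
move/subsetP=> XY; apply: connect_sub => p q /and3P[pX qX pq].
by apply: connect1; rewrite /restr /= pq !XY.
Qed.

Lemma connect_restr_first_step (X : {set T}) c w :
  connect (restr e X) c w -> c != w -> exists2 y, y \in X & e c y.
Proof.
case/connectP => [[|y p]] /=; first by move=> _ ->; rewrite eqxx.
by case/andP => /and3P[_ yX cy] _ _ _; exists y.
Qed.

Lemma path_restr (X : {set T}) y s :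
  path (restr e X) y s -> path e y s /\ {subset s <= X}.
Proof.
elim: s y => [|z s IHs] y //= /andP[/and3P[_ zX yz] /IHs[Ps sX]].
by split=> [|q /predU1P[->|/sX]]; rewrite ?yz.
Qed.

Lemma path_connect_restr (X : {set T}) x p :
  path e x p -> {subset x :: p <= X} -> connect (restr e X) x (last x p).
Proof.
move=> Pp sub; apply/connectP; exists p => //.
apply: (sub_in_path (P := [pred q | q \in X])) Pp => [q r qX rX qr|].
  by rewrite /restr /= qr andbT; apply/andP; split.
by apply/allP => q /sub.
Qed.

Lemma path_connect_ends (X : {set T}) v x p z :
  path e x p -> uniq (x :: p) -> {subset [predD1 x :: p & v] <= X} ->
  z \in x :: p -> z \in X ->
  exists2 w, w \in [:: x; last x p] & connect (restr e X) z w.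
Proof.
elim: p x => [|y p IHp] x Pp Up sub z_p zX.
  by exists x; rewrite ?mem_head //; move: z_p; rewrite inE => /eqP->.
case/predU1P: z_p => [->|z_p]; first by exists x; rewrite ?mem_head.
case/andP: Pp => xy Pp; case/andP: Up => x_p Up.
have sub' : {subset [predD1 y :: p & v] <= X}.
  by move=> q /andP[qv q_p]; apply: sub; rewrite inE qv /= inE q_p orbT.
have [w] := IHp y Pp Up sub' z_p zX.
rewrite !inE /= => /predU1P[->{w} zy|/eqP-> zw]; last first.
  by exists (last y p); rewrite ?inE ?eqxx ?orbT.
have yX := connect_restr_mem zy zX.
have [xX|xNX] := boolP (x \in X).
  exists x; first exact: mem_head.
  by apply: connect_trans zy (connect1 _); rewrite /restr /= yX xX e_sym.
have y_pX : {subset y :: p <= X}.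
  move=> q q_p; apply: (sub); rewrite inE /= inE q_p orbT andbT.
  apply: contraNneq xNX => qv; apply: sub; rewrite inE mem_head andbT.
  by apply: contraNneq x_p => xv; rewrite xv -qv.
exists (last y p); first by rewrite !inE eqxx orbT.
exact: connect_trans zy (path_connect_restr Pp y_pX).
Qed.

Lemma connected_on_grow (X Y : {set T}) : X \subset Y -> connected_on e X ->
  {in Y, forall z, exists2 w, w \in X & connect (restr e Y) z w} -> connected_on e Y.
Proof.
move=> XY CX reach p q pY qY.
have [wp wpX pwp] := reach p pY; have [wq wqX qwq] := reach q qY.
apply: connect_trans pwp (connect_trans (connect_restr_sub XY (CX _ _ wpX wqX)) _).
by rewrite connect_restr_sym.
Qed.

Lemma connected_on_closed (X Y : {set T}) y :
  connected_on e X -> y \in Y -> Y \subset X ->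
  (forall p q, p \in Y -> q \in X -> e p q -> q \in Y) -> X \subset Y.
Proof.
move=> CX yY /subsetP YX Y_closed; apply/subsetP => z zX.
have closedY : closed (restr e X) (mem Y).
  apply: intro_closed; first exact: connect_restr_sym.
  by move=> p q /and3P[_ qX pq] pY; apply: Y_closed pq.
by rewrite -(closed_connect closedY (CX y z (YX y yY) zX)).
Qed.

Lemma clique_connected (X : {set T}) :
  {in X &, forall p q, p != q -> e p q} -> connected_on e X.
Proof.
move=> cliqueX p q pX qX; have [->|pq] := eqVneq p q; first exact: connect0.
by apply: connect1; rewrite /restr /= pX qX cliqueX.
Qed.

Lemma ear_nonseparable (B : {set T}) x E b :
  nonseparable e B -> x \in B -> b \in B ->
  path e x (rcons E b) -> uniq (x :: rcons E b) -> {in E, forall z, z \notin B} ->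
  nonseparable e (B :|: [set z in E]).
Proof.
case=> [_ [CB CBv]] xB bB Pe Ue EB.
set B' := B :|: _.
(* D = set0 gives the connectivity of B', and D = [set v] that of B' :\ v. *)
have grow v (D : {set T}) :
    D \subset [set v] -> connected_on e (B :\: D) -> connected_on e (B' :\: D).
  move=> /subsetP Dv CBD; apply: (connected_on_grow _ CBD); first exact/setSD/subsetUl.
  move=> z; rewrite !inE => /andP[zD /orP[zB|zE]].
    by exists z; rewrite ?inE ?zD ?connect0.
  have ear_sub : {subset [predD1 x :: rcons E b & v] <= B' :\: D}.
    move=> q; rewrite inE /= => /andP[qv q_ear]; rewrite !inE.
    rewrite (contraNN (Dv q)) ?inE //=.
    move: q_ear; rewrite inE mem_rcons inE.
    by case/or3P=> [/eqP->|/eqP->|->]; rewrite ?xB ?bB ?orbT.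
  have z_ear : z \in x :: rcons E b by rewrite inE mem_rcons inE zE !orbT.
  have zB' : z \in B' :\: D by rewrite !inE zD zE orbT.
  have [w w_ends zw] := path_connect_ends Pe Ue ear_sub z_ear zB'.
  exists w => //; move: (connect_restr_mem zw zB'); rewrite !inE => /andP[-> _] /=.
  by move: w_ends; rewrite last_rcons !inE => /orP[]/eqP->.
split; [|split].
- by apply/set0Pn; exists x; rewrite !inE xB.
- by rewrite -(setD0 B'); apply: (grow x); rewrite ?sub0set ?setD0.
- move=> v _; apply: (grow v) => //.
  have [vB|vNB] := boolP (v \in B); first exact: CBv.
  by have /setDidPl-> : [disjoint B & [set v]] by rewrite disjoint_sym disjoints1.
Qed.

Lemma block_nbrs (B : {set T}) x c y : block e B -> x \in B -> c \in B -> c != x ->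
  connected_on e [set~ x] -> e x y -> y \in B.
Proof.
case=> nsB maxB xB cB cx Cx xy; apply/negPn/negP => yNB.
have y_x : y \in [set~ x] by rewrite !inE; apply: contraTneq xy => ->; rewrite e_irr.
have c_x : c \in [set~ x] by rewrite !inE.
case/connectP: (Cx y c y_x c_x) => p0 /shortenP[p Pp Up _] c_last.
have has_B : has (mem B) p.
  apply/hasP; exists c => //.
  by move: (mem_last y p); rewrite -c_last inE => /predU1P[cy|//]; rewrite -cy cB in yNB.
case: (split_find has_B) Pp Up c_last => {has_B} b q1 q2 bB q1NB Pp Up _.
have [Pq p_x] := path_restr Pp.
have Pe : path e x (rcons (y :: q1) b) by rewrite /= xy; move: Pq; rewrite cat_path => /andP[].
have Ue : uniq (x :: rcons (y :: q1) b).
  have x_q : x \notin rcons q1 b.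
    by apply/negP => xq; have := p_x x; rewrite mem_cat xq !inE eqxx => /(_ isT).
  move: Up y_x; rewrite -cat_cons cat_uniq => /andP[Uyq _]; rewrite !inE => y_x.
  by rewrite cons_uniq Uyq inE negb_or eq_sym y_x x_q.
have EB : {in y :: q1, forall z, z \notin B}.
  by move=> z /predU1P[->//|zq]; apply: contra q1NB => zB; apply/hasP; exists z.
have := maxB _ (subsetUl B [set z in y :: q1]) (ear_nonseparable nsB xB bB Pe Ue EB).
by move/setP/(_ y); rewrite !inE eqxx orbT (negbTE yNB).
Qed.

Lemma block_nbr (B : {set T}) c : connected_graph e -> 1 < #|T| -> block e B -> c \in B ->
  exists2 y, y \in B & e c y.
Proof.
move=> CG T2 [[_ [CB _]] maxB] cB.
have [/exists_inP[w wB cw]|/exists_inPn Bc] := boolP [exists w in B, c != w].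
  exact: connect_restr_first_step (CB c w cB wB) cw.
have /card_gt0P[w] : 0 < #|[set~ c]| by rewrite cardsC1; lia.
rewrite !inE eq_sym => cw.
have [y _ cy] := connect_restr_first_step (CG c w (in_setT c) (in_setT w)) cw.
have K2_clique (X : {set T}) : X \subset [set c; y] -> {in X &, forall p q, p != q -> e p q}.
  move=> /subsetP XK p q /XK pK /XK qK; rewrite !inE in pK qK.
  by case/orP: pK qK => /eqP-> /orP[]/eqP->; rewrite ?eqxx // e_sym.
have K2 : nonseparable e [set c; y].
  split; first by apply/set0Pn; exists c; rewrite !inE eqxx.
  split; first exact/clique_connected/K2_clique.
  by move=> v _; apply/clique_connected/K2_clique/subD1set.
have B_K2 : B \subset [set c; y].
  by apply/subsetP => z zB; move: (Bc z zB); rewrite negbK !inE eq_sym => ->.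
move: (maxB _ B_K2 K2) => /setP/(_ y); rewrite !inE eqxx orbT => /esym/Bc.
by rewrite negbK => /eqP cy'; rewrite -cy' e_irr in cy.
Qed.

Lemma nbhds_triangle (B : {set T}) a u w :
  nonseparable e B -> a \in B -> u \in B -> w \in B ->
  nbhd e u = [set a; w] -> nbhd e w = [set a; u] -> triangle e B.
Proof.
move=> [_ [_ CBv]] aB uB wB Nu Nw.
have nbr p q : e p q = (q \in nbhd e p) by rewrite inE.
have ua : e u a by rewrite nbr Nu !inE eqxx.
have uw : e u w by rewrite nbr Nu !inE eqxx orbT.
have wa : e w a by rewrite nbr Nw !inE eqxx.
have neq p q : e p q -> p != q by apply: contraTneq => ->; rewrite e_irr.
have uw_sub : [set u; w] \subset B :\ a.
  by apply/subsetP => q; rewrite !inE => /orP[]/eqP->; rewrite ?uB ?wB ?neq.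
have B_a : B :\ a = [set u; w].
  apply/eqP; rewrite eqEsubset uw_sub andbT.
  apply: (connected_on_closed (y := u)) (CBv a aB) _ uw_sub _; first by rewrite !inE eqxx.
  move=> p q; rewrite !inE => /orP[]/eqP-> /andP[qa _]; rewrite nbr ?Nu ?Nw !inE (negbTE qa) /=.
    by move=> ->; rewrite orbT.
  by move=> ->.
have -> : B = a |: [set u; w] by rewrite -B_a setD1K.
split.
  by rewrite cardsU1 cards2 !inE negb_or !(eq_sym a) !neq.
move=> p q; rewrite !inE => /or3P[]/eqP-> /or3P[]/eqP->; rewrite ?eqxx // => _.
all: by rewrite // e_sym.
Qed.

Section LeafBlock.
Variables (B : {set T}) (c : T).
Hypotheses (no_cc : ~ has_chorded_cycle e) (cB : c \in B)
  (B_closed : forall z y, z \in B -> z != c -> e z y -> y \in B).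

Lemma longest_end_nbhd t u y1 y2 :
  longest_spath_from B c (rcons t u) -> u != c ->
  y1 \in t -> y2 \in t -> y1 != y2 -> e u y1 -> e u y2 -> nbhd e u = [set y1; y2].
Proof.
move=> Lp uc y1t y2t y12 uy1 uy2.
have [[_ St Ut sub] _] := Lp.
have uB : u \in B by apply: sub; rewrite mem_rcons mem_head.
have N_t : nbhd e u = [set y in t | e u y].
  apply/setP => y; rewrite !inE andbC; apply/esym/andb_idr => uy.
  exact: longest_spath_end_nbrs Lp (B_closed uB uc uy) uy.
have le2 : #|nbhd e u| <= 2.
  by rewrite N_t leqNgt; apply/negP => /(path_end_nbrs_chorded_cycle St Ut).
apply/esym/eqP; rewrite eqEcard cards2 y12 le2 andbT.
by apply/subsetP => y; rewrite !inE => /orP[]/eqP->.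
Qed.

Lemma longest_rotated_end_nbhd r a b Y :
  longest_spath_from B c (r ++ a :: b :: Y) -> e a (last b Y) -> Y != [::] ->
  nbhd e b = [set a; head b Y].
Proof.
case: Y => [//|y Y] Lp a_last _ /=.
have := longest_spath_rev_tail Lp a_last.
rewrite rev_cons -rcons_cons -rcons_cat => Lq.
have [[hd Sp Up _] _] := Lp.
have /andP[ab /andP[by_ _]] : path e a [:: b, y & Y].
  by move: Sp; rewrite sorted_cat_cons => /andP[].
have bc : b != c.
  case: (r) hd Up => [|z r'] /= [<-] /andP[c_notin _]; apply/eqP => bc.
    by rewrite bc mem_head in c_notin.
  by rewrite bc mem_cat !inE eqxx !orbT in c_notin.
move: Up; rewrite cat_uniq => /and3P[_ _ /andP[a_notin _]].
apply: (longest_end_nbhd Lq bc); rewrite ?(mem_cat, inE, mem_rev, eqxx, orbT) //.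
- by apply/eqP => ay; rewrite ay !inE eqxx orbT in a_notin.
- by rewrite e_sym.
Qed.

Lemma leaf_block_triangle :
  4 <= #|T| -> delta2_ge e 4 -> connected_graph e -> block e B -> triangle e B.
Proof.
move=> T4 D2 CG blk.
have [y0 y0B cy0] := block_nbr CG (leq_trans (isT : 1 < 4) T4) blk cB.
have [p Lp] := longest_spath_from_exists cB.
move: (longest_spath_size_gt1 cB y0B cy0 Lp).
case/lastP: p Lp => [//|t u]; case/lastP: t => [//|r w] Lp _.
have [[hd Sp Up sub] _] := Lp.
have uB : u \in B by apply: sub; rewrite mem_rcons mem_head.
have wB : w \in B by apply: sub; rewrite mem_rcons inE mem_rcons mem_head orbT.
have c_rw : c \in rcons r w by case: (r) hd => [|z r'] [<-]; rewrite mem_head.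
have uc : u != c.
  by apply: contraTneq c_rw => uc; move: Up; rewrite rcons_uniq uc => /andP[].
have wu : e w u.
  by move: Sp; rewrite -!cats1 -catA sorted_cat_cons => /andP[_] /= /andP[].
have [/existsP[a /andP[ua aw]]|/existsPn no_a] := boolP [exists a, e u a && (a != w)]; last first.
  case: no_cc; apply: (deg_le1_chorded_cycle (u := u) (w := w)) => // y uy.
  by apply/eqP; move: (no_a y); rewrite uy negbK.
have a_rw := longest_spath_end_nbrs Lp (B_closed uB uc ua) ua.
have aB : a \in B by apply: sub; rewrite mem_rcons inE a_rw orbT.
have Nu : nbhd e u = [set a; w].
  by apply: (longest_end_nbhd Lp uc a_rw) => //; rewrite ?mem_rcons ?mem_head // e_sym.
have a_r : a \in r by move: a_rw; rewrite mem_rcons inE (negbTE aw).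
case/splitPr: a_r Lp Up => r1 [|b r2] Lp Up; rewrite -!cats1 -!catA /= in Lp Up.
  have Nw : nbhd e w = [set a; u] by apply: (longest_rotated_end_nbhd Lp); rewrite //= e_sym.
  exact: nbhds_triangle blk.1 aB uB wB Nu Nw.
have Nb : nbhd e b = [set a; head b (r2 ++ [:: w; u])].
  apply: (longest_rotated_end_nbhd Lp); first by rewrite last_cat /= e_sym.
  by case: (r2).
move: Up; rewrite cat_uniq => /and3P[_ _ /and3P[a_notin b_notin _]].
have ub : u != b by apply/eqP => ub; rewrite -ub mem_cat !inE eqxx !orbT in b_notin.
have ba : b != a by apply/eqP => ba; rewrite ba mem_head in a_notin.
have bw : b != w by apply/eqP => bw; rewrite bw mem_cat !inE eqxx orbT in b_notin.
have nub : ~~ e u b.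
  have -> : e u b = (b \in nbhd e u) by rewrite inE.
  by rewrite Nu !inE negb_or ba bw.
by case: (not_delta2_ge4 ub nub Nu Nb).
Qed.

End LeafBlock.
End Graph.

Theorem lemma2p9 (T : finType) (e : rel T) :
  symmetric e -> irreflexive e ->
  connected_graph e -> 4 <= #|T| -> delta2_ge e 4 ->
  has_chorded_cycle e \/ (forall B : {set T}, leaf_block e B -> triangle e B).
Proof.
move=> e_sym e_irr CG T4 D2.
have [cc|no_cc] := classic (has_chorded_cycle e); [by left | right].
move=> B [blk [c [cB _ c_unique]]].
apply: (leaf_block_triangle e_sym e_irr no_cc cB _ T4 D2 CG blk) => z y zB zc.
apply: (block_nbrs e_sym e_irr blk zB cB); first by rewrite eq_sym.
by apply: NNPP => /(c_unique z zB) /eqP; rewrite (negbTE zc).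
Qed.
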